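(* Let $\{R_i\}_{i}$ be an arbitrary family of avoidance rings and $R=\prod_i R_i$. Then $R$ is an avoidance ring if and only if $R/I$ is an avoidance ring, where $I=\bigoplus_i R_i\subseteq R$ is the ideal of elements with only finitely many nonzero coordinates.
   Context: All rings are commutative with $1\neq 0$. An ideal $I$ of a ring $R$ has avoidance if whenever $I_1,\ldots,I_n$ are finitely many ideals of $R$ with $I\subseteq\bigcup_{k=1}^n I_k$, then $I\subseteq I_k$ for some $k$. A ring is an avoidance ring if every ideal of it has avoidance. *)

From HB Require Import structures.
From mathcomp Require Import all_boot all_order all_algebra.
From mathcomp Require Import generic_quotient ring.
From mathcomp Require Import boolp classical_sets cardinality.

Set Implicit Arguments.
Unset Strict Implicit.
Unset Printing Implicit Defensive.

Import GRing.Theory.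
Local Open Scope ring_scope.
Local Open Scope classical_set_scope.
Local Open Scope quotient_scope.

(* Ideals and avoidance.  Rings are commutative (comPzRingType; the
   zero ring is allowed only so that degenerate quotients/products,
   e.g. R/I with I = R, are still rings).               *)

Definition is_ideal (R : comPzRingType) (J : set R) : Prop :=
  [/\ J 0,
      (forall x y, J x -> J y -> J (x + y)) &
      (forall r x, J x -> J (r * x))].

Definition has_avoidance (R : comPzRingType) (J : set R) : Prop :=
  forall (n : nat) (K : 'I_n -> set R),
    (forall k, is_ideal (K k)) ->
    J `<=` \bigcup_(k in [set: 'I_n]) K k ->
    exists k : 'I_n, J `<=` K k.

Definition avoidance_ring (R : comPzRingType) : Prop :=
  forall J : set R, is_ideal J -> has_avoidance J.

(* Bundled ideals (needed to form quotient rings). *)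
Record ideal (R : comPzRingType) := Ideal {
  ideal_set : set R;
  ideal_isP : is_ideal ideal_set }.

Definition quot_rel (R : comPzRingType) (J : ideal R) : rel R :=
  fun x y => `[< ideal_set J (x - y) >].

Lemma ideal0 (R : comPzRingType) (J : ideal R) : ideal_set J 0.
Proof. by case: (ideal_isP J). Qed.

Lemma idealD (R : comPzRingType) (J : ideal R) x y : ideal_set J x -> ideal_set J y -> ideal_set J (x + y).
Proof. by case: (ideal_isP J) => _ H _; apply: H. Qed.

Lemma idealM (R : comPzRingType) (J : ideal R) r x : ideal_set J x -> ideal_set J (r * x).
Proof. by case: (ideal_isP J) => _ _ H; apply: H. Qed.

Lemma idealN (R : comPzRingType) (J : ideal R) x : ideal_set J x -> ideal_set J (- x).
Proof. by move=> Jx; rewrite -mulN1r; apply: idealM. Qed.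

Lemma quot_rel_is_equiv (R : comPzRingType) (J : ideal R) :
  equiv_class_of (quot_rel J).
Proof.
split=> [x|x y|y x z]; rewrite /quot_rel.
- by apply/asboolP; rewrite subrr; apply: ideal0.
- by apply/asboolP/asboolP => H; rewrite -opprB; apply: idealN.
- move=> /asboolP Hxy /asboolP Hyz; apply/asboolP.
  by rewrite -[x](addrNK y) -addrA; apply: idealD.
Qed.

Canonical quot_rel_equiv (R : comPzRingType) (J : ideal R) :=
  EquivRelPack (quot_rel_is_equiv J).
Canonical quot_rel_encModRel (R : comPzRingType) (J : ideal R) :=
  defaultEncModRel (quot_rel J).

Definition rquot (R : comPzRingType) (J : ideal R) := {eq_quot quot_rel J}.

HB.instance Definition _ (R : comPzRingType) (J : ideal R) :
  EqQuotient R (quot_rel J) (rquot J) := EqQuotient.on (rquot J).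
HB.instance Definition _ (R : comPzRingType) (J : ideal R) :=
  Choice.on (rquot J).

Lemma rquot_eqE (R : comPzRingType) (J : ideal R) (x y : R) :
  (x == y %[mod rquot J]) = `[< ideal_set J (x - y) >].
Proof. by rewrite piE. Qed.

Definition rq_zero (R : comPzRingType) (J : ideal R) : rquot J :=
  lift_cst (rquot J) 0.
Definition rq_add (R : comPzRingType) (J : ideal R) :=
  lift_op2 (rquot J) +%R.
Definition rq_opp (R : comPzRingType) (J : ideal R) :=
  lift_op1 (rquot J) -%R.
Definition rq_one (R : comPzRingType) (J : ideal R) : rquot J :=
  lift_cst (rquot J) 1.
Definition rq_mul (R : comPzRingType) (J : ideal R) :=
  lift_op2 (rquot J) *%R.

Arguments rq_add {R} J.
Arguments rq_opp {R} J.
Arguments rq_mul {R} J.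

Canonical rq_pi_zero_morph (R : comPzRingType) (J : ideal R) :=
  PiConst (rq_zero J).
Canonical rq_pi_one_morph (R : comPzRingType) (J : ideal R) :=
  PiConst (rq_one J).

Lemma rq_reprP (R : comPzRingType) (J : ideal R) (x : R) :
  ideal_set J (repr (\pi_(rquot J) x) - x).
Proof.
by have /eqP := reprK (\pi_(rquot J) x); rewrite rquot_eqE => /asboolP.
Qed.

Lemma rq_pi_opp (R : comPzRingType) (J : ideal R) :
  {morph \pi_(rquot J) : x / - x >-> rq_opp J x}.
Proof.
move=> x; unlock rq_opp; apply/eqP; rewrite rquot_eqE; apply/asboolP.
by rewrite opprK addrC; apply: rq_reprP.
Qed.
Canonical rq_pi_opp_morph (R : comPzRingType) (J : ideal R) :=
  PiMorph1 (rq_pi_opp J).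

Lemma rq_pi_add (R : comPzRingType) (J : ideal R) :
  {morph \pi_(rquot J) : x y / x + y >-> rq_add J x y}.
Proof.
move=> x y; unlock rq_add; apply/eqP; rewrite rquot_eqE; apply/asboolP.
have Hx := rq_reprP J x; have Hy := rq_reprP J y.
have -> : x + y - (repr (\pi_(rquot J) x) + repr (\pi_(rquot J) y)) =
  - ((repr (\pi_(rquot J) x) - x) + (repr (\pi_(rquot J) y) - y)).
  by ring.
by apply: idealN; apply: idealD.
Qed.
Canonical rq_pi_add_morph (R : comPzRingType) (J : ideal R) :=
  PiMorph2 (rq_pi_add J).

Lemma rq_pi_mul (R : comPzRingType) (J : ideal R) :
  {morph \pi_(rquot J) : x y / x * y >-> rq_mul J x y}.
Proof.
move=> x y; unlock rq_mul; apply/eqP; rewrite rquot_eqE; apply/asboolP.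
set a := repr (\pi_(rquot J) x); set b := repr (\pi_(rquot J) y).
have Hx : ideal_set J (a - x) := rq_reprP J x; have Hy : ideal_set J (b - y) := rq_reprP J y.
have -> : x * y - a * b = - ((a - x) * y + a * (b - y)).
  by ring.
by apply: idealN; apply: idealD; [rewrite mulrC|]; apply: idealM.
Qed.
Canonical rq_pi_mul_morph (R : comPzRingType) (J : ideal R) :=
  PiMorph2 (rq_pi_mul J).

Lemma rq_addA (R : comPzRingType) (J : ideal R) : associative (rq_add J).
Proof. by move=> x y z; rewrite -[x]reprK -[y]reprK -[z]reprK !piE addrA. Qed.
Lemma rq_addC (R : comPzRingType) (J : ideal R) : commutative (rq_add J).
Proof. by move=> x y; rewrite -[x]reprK -[y]reprK !piE addrC. Qed.
Lemma rq_add0 (R : comPzRingType) (J : ideal R) : left_id (rq_zero J) (rq_add J).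
Proof. by move=> x; rewrite -[x]reprK !piE add0r. Qed.
Lemma rq_addN (R : comPzRingType) (J : ideal R) :
  left_inverse (rq_zero J) (rq_opp J) (rq_add J).
Proof. by move=> x; rewrite -[x]reprK !piE addNr. Qed.

HB.instance Definition _ (R : comPzRingType) (J : ideal R) :=
  GRing.isZmodule.Build (rquot J) (@rq_addA R J) (@rq_addC R J)
    (@rq_add0 R J) (@rq_addN R J).

Lemma rq_mulA (R : comPzRingType) (J : ideal R) : associative (rq_mul J).
Proof. by move=> x y z; rewrite -[x]reprK -[y]reprK -[z]reprK !piE mulrA. Qed.
Lemma rq_mulC (R : comPzRingType) (J : ideal R) : commutative (rq_mul J).
Proof. by move=> x y; rewrite -[x]reprK -[y]reprK !piE mulrC. Qed.
Lemma rq_mul1 (R : comPzRingType) (J : ideal R) : left_id (rq_one J) (rq_mul J).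
Proof. by move=> x; rewrite -[x]reprK !piE mul1r. Qed.
Lemma rq_mulDl (R : comPzRingType) (J : ideal R) :
  left_distributive (rq_mul J) (rq_add J).
Proof.
by move=> x y z; rewrite -[x]reprK -[y]reprK -[z]reprK !piE mulrDl.
Qed.

HB.instance Definition _ (R : comPzRingType) (J : ideal R) :=
  GRing.Zmodule_isComPzRing.Build (rquot J) (@rq_mulA R J) (@rq_mulC R J)
    (@rq_mul1 R J) (@rq_mulDl R J).

Definition dprod (I : Type) (R : I -> comNzRingType) := forall i, R i.

HB.instance Definition _ (I : Type) (R : I -> comNzRingType) :=
  Choice.on (dprod R).

Definition dp_zero I (R : I -> comNzRingType) : dprod R := fun i => 0.
Definition dp_one I (R : I -> comNzRingType) : dprod R := fun i => 1.
Definition dp_add I (R : I -> comNzRingType) (x y : dprod R) : dprod R :=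
  fun i => x i + y i.
Definition dp_opp I (R : I -> comNzRingType) (x : dprod R) : dprod R :=
  fun i => - x i.
Definition dp_mul I (R : I -> comNzRingType) (x y : dprod R) : dprod R :=
  fun i => x i * y i.

Lemma dp_addA I (R : I -> comNzRingType) : associative (@dp_add I R).
Proof. by move=> x y z; apply: functional_extensionality_dep => i; apply: addrA. Qed.
Lemma dp_addC I (R : I -> comNzRingType) : commutative (@dp_add I R).
Proof. by move=> x y; apply: functional_extensionality_dep => i; apply: addrC. Qed.
Lemma dp_add0 I (R : I -> comNzRingType) : left_id (@dp_zero I R) (@dp_add I R).
Proof. by move=> x; apply: functional_extensionality_dep => i; apply: add0r. Qed.
Lemma dp_addN I (R : I -> comNzRingType) :
  left_inverse (@dp_zero I R) (@dp_opp I R) (@dp_add I R).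
Proof. by move=> x; apply: functional_extensionality_dep => i; apply: addNr. Qed.

HB.instance Definition _ I (R : I -> comNzRingType) :=
  GRing.isZmodule.Build (dprod R) (@dp_addA I R) (@dp_addC I R)
    (@dp_add0 I R) (@dp_addN I R).

Lemma dp_mulA I (R : I -> comNzRingType) : associative (@dp_mul I R).
Proof. by move=> x y z; apply: functional_extensionality_dep => i; apply: mulrA. Qed.
Lemma dp_mulC I (R : I -> comNzRingType) : commutative (@dp_mul I R).
Proof. by move=> x y; apply: functional_extensionality_dep => i; apply: mulrC. Qed.
Lemma dp_mul1 I (R : I -> comNzRingType) : left_id (@dp_one I R) (@dp_mul I R).
Proof. by move=> x; apply: functional_extensionality_dep => i; apply: mul1r. Qed.
Lemma dp_mulDl I (R : I -> comNzRingType) :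
  left_distributive (@dp_mul I R) (@dp_add I R).
Proof. by move=> x y z; apply: functional_extensionality_dep => i; apply: mulrDl. Qed.

HB.instance Definition _ I (R : I -> comNzRingType) :=
  GRing.Zmodule_isComPzRing.Build (dprod R) (@dp_mulA I R) (@dp_mulC I R)
    (@dp_mul1 I R) (@dp_mulDl I R).

Definition support I (R : I -> comNzRingType) (x : dprod R) : set I :=
  [set i | x i != 0].

Definition dsum_set I (R : I -> comNzRingType) : set (dprod R) :=
  [set x | finite_set (support x)].
Arguments dsum_set {I} R _.

Lemma dsum_is_ideal I (R : I -> comNzRingType) : is_ideal (dsum_set R).
Proof.
split.
- rewrite /dsum_set /support /=.
  have -> : [set i | (0 : dprod R) i != 0] = set0.
    by apply/seteqP; split => i //=; rewrite eqxx.
  exact: finite_set0.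
- move=> x y; rewrite /dsum_set /= => Hx Hy.
  have HU : finite_set (support x `|` support y) by rewrite finite_setU.
  apply: (sub_finite_set _ HU) => i; rewrite /support /=.
  case: (eqVneq (x i) 0) => [Hx0|]; last by left.
  move=> H; right; move: H; change ((x + y) i) with (x i + y i).
  by rewrite Hx0 add0r.
- move=> r x; rewrite /dsum_set /= => Hx.
  apply: (sub_finite_set _ Hx) => i; rewrite /support /=.
  by apply: contraNN => /eqP Hi; change ((r * x) i) with (r i * x i); rewrite Hi mulr0.
Qed.

Definition dsum_ideal I (R : I -> comNzRingType) : ideal (dprod R) :=
  Ideal (dsum_is_ideal R).

(** Surjective ring maps pull avoidance back along preimages, which gives
    the forward direction. Conversely, let J ⊆ K_1 ∪ ... ∪ K_n in
    R = ∏ R_i with J ⊄ K_k for all k. An ideal K of R contains J as soon as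
    it does so modulo ⊕ R_i and in every coordinate, so each K_k fails one
    of these tests: either π(J) ⊄ π(K_k), or J_i ⊄ (K_k)_i for some i.
    Avoidance in R/⊕ R_i gives z ∈ J escaping the first kind, avoidance in
    each R_i gives y^i ∈ J whose i-th coordinate escapes the second kind, and
    overwriting the finitely many relevant coordinates of z by those of the
    y^i produces an element of J lying in no K_k. *)
From Pilot Require Import Defs.
From HB Require Import structures.
From mathcomp Require Import all_boot all_order all_algebra.
From mathcomp Require Import generic_quotient ring.
From mathcomp Require Import boolp classical_sets cardinality.

Set Implicit Arguments.
Unset Strict Implicit.
Unset Printing Implicit Defensive.

Import GRing.Theory.
Local Open Scope ring_scope.
Local Open Scope classical_set_scope.
Local Open Scope quotient_scope.

Lemma avoidance_witness (S : comPzRingType) (J : set S) n (K : 'I_n -> set S)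
    (P : 'I_n -> Prop) :
  is_ideal J -> has_avoidance J -> (forall k, is_ideal (K k)) ->
  (forall k, P k -> ~ J `<=` K k) ->
  exists2 x, J x & forall k, P k -> ~ K k x.
Proof.
move=> [J0 _ _] avJ idK notJK.
have [[k0 Pk0]|noP] := pselect (exists k, P k); last first.
  by exists 0 => // k Pk; case: noP; exists k.
apply: contrapT => noWitness.
(* Replacing the ideals outside P by K k0 keeps the family finite and does
   not change which ones J lies in. *)
pose K' k := if `[< P k >] then K k else K k0.
have [k JK'k] : exists k, J `<=` K' k.
  apply: avJ => [k|x Jx]; first by rewrite /K'; case: ifP.
  apply: contrapT => notK'x; apply: noWitness; exists x => // k Pk Kkx.
  by apply: notK'x; exists k => //; rewrite /K' asboolT.
move: JK'k; rewrite /K'; case: asboolP => [Pk|_]; exact: notJK.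
Qed.

Section SurjectiveImage.
Variables (S T : comPzRingType) (f : S -> T).
Hypotheses (f0 : f 0 = 0) (fD : {morph f : x y / x + y})
  (fM : {morph f : x y / x * y}) (f_surj : forall t, exists s, f s = t).

Lemma is_ideal_image (J : set S) : is_ideal J -> is_ideal (f @` J).
Proof.
move=> [J0 JD JM]; split; first by exists 0.
  by move=> _ _ [x Jx <-] [y Jy <-]; exists (x + y); rewrite ?fD //; apply: (JD).
move=> t _ [x Jx <-]; have [s <-] := f_surj t.
by exists (s * x); rewrite ?fM //; apply: (JM).
Qed.

Lemma is_ideal_preimage (J : set T) : is_ideal J -> is_ideal (f @^-1` J).
Proof.
move=> [J0 JD JM]; split; rewrite /preimage /=; first by rewrite f0.
  by move=> x y Jx Jy; rewrite fD; apply: (JD).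
by move=> r x Jx; rewrite fM; apply: (JM).
Qed.

Lemma avoidance_ring_surj : avoidance_ring S -> avoidance_ring T.
Proof.
move=> avS J idJ n K idK JK.
have [k JKk] : exists k, f @^-1` J `<=` f @^-1` K k.
  apply: (avS _ (is_ideal_preimage idJ)) => [k|x Jfx]; first exact: is_ideal_preimage.
  by have [k _ Kk] := JK _ Jfx; exists k.
by exists k => t Jt; have [s fst] := f_surj t; move: Jt; rewrite -fst; apply: JKk.
Qed.

End SurjectiveImage.

Lemma rquot_piP (S : comPzRingType) (J : ideal S) (x y : S) :
  \pi_(rquot J) x = \pi_(rquot J) y <-> ideal_set J (x - y).
Proof.
split=> [/eqP|Jxy]; first by rewrite rquot_eqE => /asboolP.
by apply/eqP; rewrite rquot_eqE; apply/asboolP.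
Qed.

Lemma rquot_pi_surj (S : comPzRingType) (J : ideal S) (u : rquot J) :
  exists x, \pi_(rquot J) x = u.
Proof. by exists (repr u); rewrite reprK. Qed.

Lemma is_ideal_rquot_image (S : comPzRingType) (J : ideal S) (A : set S) :
  is_ideal A -> is_ideal (\pi_(rquot J) @` A).
Proof.
apply: is_ideal_image; first by rewrite piE.
- exact: rq_pi_add.
- exact: rq_pi_mul.
- exact: rquot_pi_surj.
Qed.

Lemma avoidance_ring_rquot (S : comPzRingType) (J : ideal S) :
  avoidance_ring S -> avoidance_ring (rquot J).
Proof.
apply: (avoidance_ring_surj (f := \pi_(rquot J))); first by rewrite piE.
- exact: rq_pi_add.
- exact: rq_pi_mul.
- exact: rquot_pi_surj.
Qed.

Lemma finite_set_Some (T : finType) (U : Type) (g : T -> option U) :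
  finite_set [set u | exists k, g k = Some u].
Proof.
apply: (@sub_finite_set _ _ (\bigcup_(k in [set: T]) [set u | g k = Some u])).
  by move=> u [k gk]; exists k.
apply: bigcup_finite => [|k _]; first exact: finite_finset.
case: (g k) => [u|]; last exact: (sub_finite_set _ (finite_set0 U)).
by apply: (sub_finite_set _ (finite_set1 u)) => v [->].
Qed.

Section DirectProduct.
Variables (I : Type) (R : I -> comNzRingType).

Local Notation piQ := \pi_(rquot (dsum_ideal R)).

Definition dp_proj (i : I) (x : dprod R) : R i := x i.

Definition dp_delta (i : I) : dprod R := fun j => if `[< j = i >] then 1 else 0.

Lemma dp_deltaM i (x : dprod R) j :
  (dp_delta i * x) j = if `[< j = i >] then x j else 0.
Proof.
change ((dp_delta i * x) j) with (dp_delta i j * x j); rewrite /dp_delta.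
by case: ifP; rewrite ?mul1r ?mul0r.
Qed.

Lemma dp_deltaM_coord i (x y : dprod R) :
  x i = y i -> dp_delta i * x = dp_delta i * y.
Proof.
move=> xy; apply: functional_extensionality_dep => j; rewrite !dp_deltaM.
by case: asboolP => [->|].
Qed.

Lemma dp_proj_surj i (r : R i) : exists x : dprod R, dp_proj i x = r.
Proof.
exists (fun j => if pselect (i = j) is left e then eq_rect i R r j e else 0).
by rewrite /dp_proj; case: pselect => // e; rewrite (Prop_irrelevance e erefl).
Qed.

Lemma is_ideal_dp_proj_image i (A : set (dprod R)) :
  is_ideal A -> is_ideal (dp_proj i @` A).
Proof. by apply: is_ideal_image => //; apply: dp_proj_surj. Qed.

(* A finitely supported d is the finite sum of its pieces dp_delta i * d. *)
Lemma dsum_mem_ideal (K : set (dprod R)) (d : dprod R) :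
  is_ideal K -> dsum_set R d -> (forall i, K (dp_delta i * d)) -> K d.
Proof.
move=> idK /(@finite_seqP {classic I})[s supp_d]; have [K0 KD KM] := idK.
have {supp_d} : forall j, d j != 0 -> (j : {classic I}) \in s.
  by move=> j dj; have : Defs.support d j by []; rewrite supp_d.
elim: s d => [|i s IHs] d supp_d Kd.
  suff -> : d = 0 by [].
  by apply: functional_extensionality_dep => j; apply/eqP/contraT => /supp_d.
rewrite -(subrK (dp_delta i * d) d); apply: (KD) => //; apply: IHs => [j|k].
  change ((d - dp_delta i * d) j) with (d j - (dp_delta i * d) j).
  rewrite dp_deltaM; case: asboolP => [->|ji]; first by rewrite subrr eqxx.
  by rewrite subr0 => /supp_d; rewrite inE => /orP[/eqP|].
have -> : dp_delta k * (d - dp_delta i * d) =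
          dp_delta k * d + (- 1) * (dp_delta i * (dp_delta k * d)) by ring.
by apply: (KD); [exact: Kd | do 2 apply: (KM)].
Qed.

Lemma sub_ideal_quot_proj (J K : set (dprod R)) :
  is_ideal K -> piQ @` J `<=` piQ @` K ->
  (forall i, dp_proj i @` J `<=` dp_proj i @` K) -> J `<=` K.
Proof.
move=> idK JKq JKi w Jw; have [K0 KD KM] := idK.
have [u Ku /rquot_piP Duw] := JKq _ (ex_intro2 _ _ w Jw erefl).
rewrite -[w](subKr u) addrC; apply: (KD) => //.
have -> : - (u - w) = (- 1) * (u - w) by rewrite mulN1r.
apply: (KM); apply: (dsum_mem_ideal idK Duw) => i.
have [v Kv vw] := JKi i _ (ex_intro2 _ _ w Jw erefl).
have -> : dp_delta i * (u - w) = dp_delta i * u + (- 1) * (dp_delta i * v).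
  by rewrite (dp_deltaM_coord vw) mulrBr mulN1r.
by apply: (KD); [apply: (KM) | do 2 apply: (KM)].
Qed.

Lemma dsum_patch (J : set (dprod R)) (S : set I) (z : dprod R)
    (y : I -> dprod R) :
  is_ideal J -> finite_set S -> J z -> (forall i, J (y i)) ->
  exists x, [/\ J x, dsum_set R (x - z) & forall i, S i -> x i = y i i].
Proof.
move=> idJ finS Jz Jy; have [J0 JD JM] := idJ.
pose x : dprod R := fun j => if `[< S j >] then y j j else z j.
have xz j : (x - z) j = if `[< S j >] then y j j - z j else 0.
  by change ((x - z) j) with (x j - z j); rewrite /x; case: ifP; rewrite ?subrr.
have Dxz : dsum_set R (x - z).
  by apply: (sub_finite_set _ finS) => j; rewrite /Defs.support /= xz; case: asboolP; rewrite ?eqxx.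
exists x; split => // [|i Si]; last by rewrite /x asboolT.
rewrite -(subrK z x); apply: (JD) => //; apply: dsum_mem_ideal => // i.
have -> : dp_delta i * (x - z) =
          dp_delta i * (if `[< S i >] then y i - z else 0).
  by apply: dp_deltaM_coord; rewrite xz; case: asboolP.
case: asboolP => _; rewrite ?mulr0 //; apply: (JM); apply: (JD) => //.
by rewrite -mulN1r; apply: (JM).
Qed.

Lemma avoidance_ring_dprod :
  (forall i, avoidance_ring (R i)) -> avoidance_ring (rquot (dsum_ideal R)) ->
  avoidance_ring (dprod R).
Proof.
move=> avR avQ J idJ n K idK JK; apply: contrapT => noK.
have idQ := @is_ideal_rquot_image _ (dsum_ideal R).
have idP := is_ideal_dp_proj_image.
have failing_test k : exists o : option I,
    if o is Some i then ~ dp_proj i @` J `<=` dp_proj i @` K k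
    else ~ piQ @` J `<=` piQ @` K k.
  apply: contrapT => noWitness; apply: noK; exists k.
  apply: sub_ideal_quot_proj => [||i]; first exact: idK.
    by apply: contrapT => ?; apply: noWitness; exists None.
  by apply: contrapT => ?; apply: noWitness; exists (Some i).
have [g gP] := choice failing_test.
have [_ [z Jz <-] zP] : exists2 u, (piQ @` J) u & forall k, g k = None -> ~ (piQ @` K k) u.
  apply: avoidance_witness => [||k|k gk]; [exact: idQ|exact/avQ/idQ|exact/idQ/idK|].
  by have := gP k; rewrite gk.
have coord_witness i : exists w : dprod R,
    J w /\ forall k, g k = Some i -> ~ (dp_proj i @` K k) (w i).
  have [_ [w Jw <-] wP] : exists2 r, (dp_proj i @` J) r &
      forall k, g k = Some i -> ~ (dp_proj i @` K k) r.
    apply: avoidance_witness => [||k|k gk]; [exact: idP|exact/avR/idP|exact/idP/idK|].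
    by have := gP k; rewrite gk.
  by exists w.
have [y yP] := choice coord_witness.
have [x [Jx Dxz xy]] := dsum_patch idJ (finite_set_Some g) Jz (fun i => (yP i).1).
have [k _ Kx] := JK x Jx.
have := gP k; case gk: (g k) => [i|] _.
  by apply: ((yP i).2 k gk); rewrite -xy; [exists x | exists k].
by apply: (zP k gk); exists x => //; apply/rquot_piP.
Qed.

End DirectProduct.

Theorem corollary3p12 (I : Type) (R : I -> comNzRingType) :
  (forall i : I, avoidance_ring (R i)) ->
  (avoidance_ring (dprod R) <-> avoidance_ring (rquot (dsum_ideal R))).
Proof.
move=> avR; split; first exact: avoidance_ring_rquot.
exact: avoidance_ring_dprod.
Qed.
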